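(* Let $X$ be a locally compact metrizable space that is not compact, and suppose that $\operatorname{Homeo}_{\overline U}(X)$ is not locally compact for every non-empty open set $U\subseteq X$ with $\overline U$ compact. Then the family $\{\operatorname{Homeo}_K(X)\}_{K\in\mathscr K(X)}$ does not satisfy ACP.
   Context: For a compact subset $K$ of a locally compact Hausdorff space $X$, $\operatorname{Homeo}_K(X)$ denotes the group of homeomorphisms $h$ of $X$ with $h(x)=x$ for all $x\in X\setminus K$, equipped with the compact-open topology (it is a topological group). $\mathscr K(X)$ is the set of compact subsets of $X$ ordered by inclusion, and the family has inclusions as bonding maps. For a directed family $\{G_\alpha\}$ of topological groups with inclusions that are closed embeddings as bonding maps and union $G$, the colimit space topology is $\mathscr T=\{U\subseteq G\mid U\cap G_\alpha\text{ open in }G_\alpha\ \forall\alpha\}$; the family satisfies ACP if $(G,\mathscr T)$ is a topological group (equivalently, $\mathscr T$ equals the finest group topology making all inclusions continuous). *)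

From HB Require Import structures.
From mathcomp Require Import all_boot all_order all_algebra.
From mathcomp Require Import all_classical all_reals all_analysis.
From Stdlib Require Reals.

Set Implicit Arguments. Unset Strict Implicit. Unset Printing Implicit Defensive.
Local Open Scope classical_set_scope.

Definition metrizable (X : topologicalType) : Prop :=
  exists d : X -> X -> Rdefinitions.R,
    (forall x y, Rdefinitions.Rle Rdefinitions.R0 (d x y)) /\
    (forall x y, d x y = Rdefinitions.R0 <-> x = y) /\
    (forall x y, d x y = d y x) /\
    (forall x y z, Rdefinitions.Rle (d x z) (Rdefinitions.Rplus (d x y) (d y z))) /\
    (forall A : set X, open A <->
       (forall x, A x -> exists e, Rdefinitions.Rlt Rdefinitions.R0 e /\ [set y | Rdefinitions.Rlt (d x y) e] `<=` A)).

Definition is_homeo (X : topologicalType) (h : X -> X) : Prop :=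
  continuous h /\ exists g : X -> X, continuous g /\ cancel h g /\ cancel g h.

Definition HomeoK (X : topologicalType) (K : set X) : set {compact-open, X -> X} :=
  [set h | is_homeo h /\ forall x, ~ K x -> h x = x].

Definition open_in (T : topologicalType) (S A : set T) : Prop :=
  exists O : set T, open O /\ A `&` S = O `&` S.

(* The subspace S is locally compact: every point of S has a compact
   neighbourhood in S (compactness of a subset is intrinsic). *)
Definition subspace_locally_compact (T : topologicalType) (S : set T) : Prop :=
  forall s, S s -> exists (O C : set T),
    [/\ open O, O s, O `&` S `<=` C, C `<=` S & compact C].

Definition HomeoC (X : topologicalType) : set {compact-open, X -> X} :=
  [set h | exists K : set X, compact K /\ HomeoK K h].

Definition colim_open (X : topologicalType) (W : set {compact-open, X -> X}) : Prop :=
  W `<=` @HomeoC X /\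
  forall K : set X, compact K -> open_in (HomeoK K) (W `&` HomeoK K).

(* ACP: (G, colimit topology) is a topological group, i.e. composition
   G x G -> G is continuous (for the product topology) and inversion is
   continuous. *)
Definition ACP (X : topologicalType) : Prop :=
  (forall W, colim_open W ->
     forall g h, @HomeoC X g -> @HomeoC X h -> W (g \o h) ->
     exists U V, [/\ colim_open U, colim_open V, U g, V h &
                   forall u v, U u -> V v -> W (u \o v)]) /\
  (forall W, colim_open W ->
     colim_open [set g | @HomeoC X g /\
        exists g' : {compact-open, X -> X}, [/\ W g', cancel g g' & cancel g' g]]).

(* Fix a metric d inducing the topology.  As X is not compact, some sequence
   (x_n) has no cluster point.  Around x_0 and around far-away points x_(N+k)
   take balls U_0, U_k whose closures C_0, C_k are compact, with C_k disjoint
   from C_0, radius of U_k at most 1/(k+1), so that every compact set meets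
   only finitely many C_k.
   Since Homeo_(C_0)(X) is not locally compact, for every k there is a sequence
   (a_kj)_j in Homeo_(C_0)(X), uniformly 1/(k+1)-close to the identity, with no
   cluster point; since Homeo_(C_k)(X) is not discrete, there are b_kj <> id in
   Homeo_(C_k)(X) uniformly 1/(j+1)-close to the identity.
   The set E of all a_kj o b_kj meets every Homeo_K(X) in a closed set: only
   finitely many k occur, and, the supports being disjoint, a cluster point of
   (a_kj o b_kj)_j would be one of (a_kj)_j.  So the complement of E is open in
   the colimit topology and contains id o id, whereas any two colimit
   neighbourhoods of id contain some a_kj and b_kj respectively: composition is
   not continuous. *)

From mathcomp Require Import all_boot all_order all_algebra.
From mathcomp Require Import all_classical all_reals all_analysis.
From Stdlib Require Import RIneq Rbasic_fun Lra.

Set Implicit Arguments. Unset Strict Implicit. Unset Printing Implicit Defensive.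

Local Open Scope classical_set_scope.
Local Open Scope R_scope.

Lemma inv_succ_gt0 (n : nat) : 0 < / (INR n + 1).
Proof. by apply: Rinv_0_lt_compat; have := pos_INR n; lra. Qed.

Lemma inv_succ_le (m n : nat) : (m <= n)%nat -> / (INR n + 1) <= / (INR m + 1).
Proof.
move=> /leP le_mn; apply: Rinv_le_contravar; first by have := pos_INR m; lra.
by have := le_INR _ _ le_mn; lra.
Qed.

Lemma inv_succ_lt (e : R) : 0 < e -> exists n : nat, / (INR n + 1) < e.
Proof.
move=> e_gt0; have [n ltn] := INR_unbounded (/ e); exists n.
rewrite -(Rinv_inv e); apply: Rinv_lt_contravar.
  by apply: Rmult_lt_0_compat; [exact: Rinv_0_lt_compat | have := pos_INR n; lra].
lra.
Qed.

Lemma filter_forall_lt (T : Type) (F : set_system T) (P : nat -> set T) (n : nat) :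
  Filter F -> (forall i, (i < n)%nat -> F (P i)) ->
  F [set x | forall i, (i < n)%nat -> P i x].
Proof.
move=> FF FP.
have := @filter_forall T 'I_n (fun i => P i) F FF (fun i => FP i (ltn_ord i)).
by apply: filterS => x Px i lt_in; exact: (Px (Ordinal lt_in)).
Qed.

(** * Sequential compactness *)

Definition cluster_seq (T : topologicalType) (u : nat -> T) (p : T) : Prop :=
  forall A, nbhs p A -> forall N, exists2 n, (N <= n)%nat & A (u n).

Definition seq_compact (T : topologicalType) (S : set T) : Prop :=
  forall u : nat -> T, (forall n, S (u n)) -> exists2 p, S p & cluster_seq u p.

Lemma compact_seq_compact (T : topologicalType) (S : set T) :
  compact S -> seq_compact S.
Proof.
move=> cS u Su.
have [p [Sp clp]] : S `&` cluster (u @ \oo) !=set0.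
  exact: cS (@filterE nat (nbhs \oo) _ (u @^-1` S) Su).
exists p => // A pA N.
have tailN : (u @ \oo) (u @` [set n | (N <= n)%nat]).
  by apply: filterS (nbhs_infty_ge N) => n le_Nn; exists n.
by have [_ [[n le_Nn <-] An]] := clp _ A tailN pA; exists n.
Qed.

Lemma cluster_seq_shift (T : topologicalType) (u : nat -> T) (m : nat) (p : T) :
  cluster_seq (fun n => u (m + n)%nat) p -> cluster_seq u p.
Proof.
move=> clp A pA N; have [n le_Nn An] := clp A pA N.
by exists (m + n)%nat => //; exact: leq_trans le_Nn (leq_addl m n).
Qed.

Lemma cluster_seqP (T : topologicalType) (u : nat -> T) (p : T) :
  cluster_seq u p <-> exists J : set_system nat,
    [/\ ProperFilter J, forall N, J [set n | (N <= n)%nat] & u @ J --> p].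
Proof.
split=> [clp|[J [PJ tailsJ upJ]] A pA N]; last first.
  have uA : J (u @^-1` A) := upJ A pA.
  by have [n [le_Nn An]] := filter_ex (filterI (tailsJ N) uA); exists n.
pose J := filter_from [set AN : set T * nat | nbhs p AN.1]
  (fun AN => [set n | (AN.2 <= n)%nat /\ AN.1 (u n)]).
have JF : Filter J.
  apply: filter_from_filter; first by exists (setT, 0%nat); exact: filterT.
  move=> [A1 N1] [A2 N2] /= pA1 pA2; exists (A1 `&` A2, maxn N1 N2); first exact: filterI.
  move=> n /=; rewrite geq_max => -[/andP[le1 le2] [A1n A2n]].
  by split; split.
exists J; split.
- by apply: filter_from_proper => -[A N] /= pA; have [n le_Nn An] := clp A pA N; exists n.
- by move=> N; exists (setT, N); [exact: filterT | move=> n []].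
- by move=> A pA; exists (A, 0%nat) => // n [].
Qed.

(* [greedy_prefix t0 next n] lists the first [n] terms of the sequence w given
   by w i = next i (w restricted to indices < i); it is padded with [t0]. *)
Fixpoint greedy_prefix (T : Type) (t0 : T) (next : nat -> (nat -> T) -> T)
    (n : nat) : nat -> T :=
  if n is m.+1 then fun i =>
    if (i < m)%nat then greedy_prefix t0 next m i else next m (greedy_prefix t0 next m)
  else fun=> t0.

Lemma greedy_prefixE (T : Type) (t0 : T) next (n i : nat) : (i < n)%nat ->
  greedy_prefix t0 next n i = next i (greedy_prefix t0 next i).
Proof.
elim: n => [//|n IHn] /=; rewrite ltnS leq_eqVlt => /orP[/eqP ->|lt_in].
  by rewrite ltnn.
by rewrite lt_in IHn.
Qed.

Lemma greedy_seq (T : Type) (S : set T) (P : T -> T -> Prop) (t0 : T) :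
  (forall n (p : nat -> T), (forall i, (i < n)%nat -> S (p i)) ->
     exists2 t, S t & forall i, (i < n)%nat -> ~ P (p i) t) ->
  exists w : nat -> T, (forall n, S (w n)) /\
    forall i n, (i < n)%nat -> ~ P (w i) (w n).
Proof.
move=> extend.
have next_ex (np : nat * (nat -> T)) : exists t, (forall i, (i < np.1)%nat -> S (np.2 i)) ->
    S t /\ forall i, (i < np.1)%nat -> ~ P (np.2 i) t.
  have [Sp|nSp] := pselect (forall i, (i < np.1)%nat -> S (np.2 i)); last by exists t0 => /nSp.
  by have [t St tP] := extend _ _ Sp; exists t.
have [next' next'P] := choice next_ex; pose next n p := next' (n, p).
have nextP n p : (forall i, (i < n)%nat -> S (p i)) ->
    S (next n p) /\ forall i, (i < n)%nat -> ~ P (p i) (next n p).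
  exact: next'P (n, p).
have S_prefix n i : (i < n)%nat -> S (greedy_prefix t0 next n i).
  elim: n i => [//|n IHn] i /=; rewrite ltnS leq_eqVlt => /orP[/eqP ->|lt_in].
    by rewrite ltnn; exact: (nextP n _ (IHn)).1.
  by rewrite lt_in; exact: IHn.
exists (fun n => next n (greedy_prefix t0 next n)); split.
  by move=> n; exact: (nextP n _ (S_prefix n)).1.
move=> i n lt_in; rewrite -(greedy_prefixE t0 next lt_in).
exact: (nextP n _ (S_prefix n)).2.
Qed.

(* [ent e x y] reads "x and y are e-close".  Closeness is a relation rather than a
   distance so that the uniform distance of maps, a supremum that may be
   infinite, never has to be defined. *)
Section SeqCompactCompact.
Variables (T : topologicalType) (S : set T) (ent : R -> T -> T -> Prop).
Hypothesis entC : forall e x y, ent e x y -> ent e y x.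
Hypothesis ent_trans : forall e e' x y z, ent e x y -> ent e' y z -> ent (e + e') x z.
Hypothesis ent_le : forall e e' x y, e <= e' -> ent e x y -> ent e' x y.
Hypothesis nbhs_ent : forall s, S s -> forall A, nbhs s A ->
  exists2 e, 0 < e & forall t, S t -> ent e s t -> A t.
Hypothesis ent_nbhs : forall s, S s -> forall e, 0 < e ->
  nbhs s [set t | S t -> ent e s t].
Hypothesis seqS : seq_compact S.

Lemma seq_compact_finite_net (e : R) (s0 : T) : 0 < e -> S s0 ->
  exists n (u : nat -> T), (forall i, S (u i)) /\
    forall t, S t -> exists2 i, (i < n)%nat & ent e (u i) t.
Proof.
move=> e_gt0 Ss0; apply: contrapT => no_net.
have [w [Sw far]] : exists w : nat -> T, (forall n, S (w n)) /\
    forall i n, (i < n)%nat -> ~ ent e (w i) (w n).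
  apply: (greedy_seq s0) => n p Sp; apply: contrapT => all_close.
  apply: no_net; exists n, (fun i => if (i < n)%nat then p i else s0); split.
    by move=> i; case: ifP => // /Sp.
  move=> t St; apply: contrapT => not_close; apply: all_close.
  exists t => // i lt_in close_it; apply: not_close.
  by exists i; rewrite ?lt_in.
have [c Sc clc] := seqS Sw.
have e2_gt0 : 0 < e / 2 by lra.
have [j _ close_j] := clc _ (ent_nbhs Sc e2_gt0) 0%nat.
have [k lt_jk close_k] := clc _ (ent_nbhs Sc e2_gt0) j.+1.
apply: (far j k lt_jk); apply: (@ent_le (e / 2 + e / 2)); first lra.
exact: ent_trans (entC (close_j (Sw j))) (close_k (Sw k)).
Qed.

Lemma seq_compact_compact : compact S.
Proof.
move=> F PF FS; have [s0 Ss0] := filter_ex FS.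
have approx k : exists c, S c /\ forall A, F A ->
    exists2 t, A t & S t /\ ent (/ (INR k + 1)) c t.
  have [n [u [Su net]]] := seq_compact_finite_net (inv_succ_gt0 k) Ss0.
  apply: contrapT => no_c.
  have far i : (i < n)%nat -> F [set t | S t -> ~ ent (/ (INR k + 1)) (u i) t].
    move=> lt_in; apply: contrapT => nF; apply: no_c.
    exists (u i); split => // A FA; apply: contrapT => nA; apply: nF.
    by apply: filterS FA => t At St close_t; apply: nA; exists t.
  have [t [St farT]] := filter_ex (filterI FS (filter_forall_lt _ far)).
  have [i lt_in close_it] := net t St.
  exact: farT i lt_in St close_it.
have [c cP] := choice approx.
have [p Sp clp] := seqS (fun k => (cP k).1).
exists p; split => // A B FA pB.
have [e e_gt0 eB] := nbhs_ent Sp pB.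
have e2_gt0 : 0 < e / 2 by lra.
have [N ltN] := inv_succ_lt e2_gt0.
have [k le_Nk ck_close] := clp _ (ent_nbhs Sp e2_gt0) N.
have [t At [St close_t]] := (cP k).2 A FA.
exists t; split => //; apply: eB => //.
apply: (@ent_le (e / 2 + / (INR k + 1))); first by have := inv_succ_le le_Nk; lra.
exact: ent_trans (ck_close (cP k).1) close_t.
Qed.

End SeqCompactCompact.

(** * Metric spaces *)

Record is_metric_for (X : topologicalType) (d : X -> X -> R) : Prop := IsMetricFor {
  dist_ge0 : forall x y, 0 <= d x y;
  dist_eq0 : forall x y, d x y = 0 <-> x = y;
  distC : forall x y, d x y = d y x;
  dist_triangle : forall x y z, d x z <= d x y + d y z;
  openP : forall A : set X, open A <->
    (forall x, A x -> exists e, 0 < e /\ [set y | d x y < e] `<=` A) }.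

Lemma metrizable_metric (X : topologicalType) :
  metrizable X -> exists d : X -> X -> R, is_metric_for d.
Proof. by case=> d [? [? [? [? ?]]]]; exists d. Qed.

Section Metric.
Variables (X : topologicalType) (d : X -> X -> R).
Hypothesis hd : is_metric_for d.

Lemma dist_xx (x : X) : d x x = 0.
Proof. exact/(dist_eq0 hd). Qed.

Lemma dist_gt0 (x y : X) : x <> y -> 0 < d x y.
Proof.
move=> neq_xy; have := dist_ge0 hd x y.
have : d x y <> 0 by move/(dist_eq0 hd).
lra.
Qed.

Lemma open_dball (x : X) (e : R) : open [set y | d x y < e].
Proof.
apply/(openP hd) => y /= dxy; exists (e - d x y); split; first lra.
by move=> z /= dyz; have := dist_triangle hd x y z; lra.
Qed.

Lemma nbhs_dball (x : X) (e : R) : 0 < e -> nbhs x [set y | d x y < e].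
Proof.
by move=> e_gt0; apply: open_nbhs_nbhs; split; [exact: open_dball | rewrite /= dist_xx].
Qed.

Lemma nbhs_dballP (x : X) (A : set X) :
  nbhs x A -> exists e, 0 < e /\ [set y | d x y < e] `<=` A.
Proof.
rewrite nbhsE => -[B [oB Bx] BA].
have [e [e_gt0 eB]] := proj1 (openP hd B) oB x Bx.
by exists e; split => // y /eB /BA.
Qed.

Lemma closed_dcball (x : X) (r : R) : closed [set y | d x y <= r].
Proof.
rewrite -openC; apply/(openP hd) => y /= ltry.
exists (d x y - r); split; first lra.
by move=> z /= dyz dxz; have := dist_triangle hd x z y; rewrite (distC hd z y); lra.
Qed.

Lemma closure_dball_le (x : X) (r : R) :
  closure [set y | d x y < r] `<=` [set y | d x y <= r].
Proof.
rewrite [X in _ `<=` X](closure_id _).1; last exact: closed_dcball.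
by apply: closureS => y /=; lra.
Qed.

Lemma compact_thickening (Y O : set X) : compact Y -> open O -> Y `<=` O ->
  exists e, 0 < e /\ forall y z, Y y -> d y z < e -> O z.
Proof.
move=> cY oO YO; apply: contrapT => no_e.
have bad n : exists yz : X * X, Y yz.1 /\ d yz.1 yz.2 < / (INR n + 1) /\ ~ O yz.2.
  apply: contrapT => nbad; apply: no_e.
  exists (/ (INR n + 1)); split; first exact: inv_succ_gt0.
  move=> y z Yy dyz; apply: contrapT => nOz; apply: nbad.
  by exists (y, z).
have [yz yzP] := choice bad.
have [p Yp clp] := compact_seq_compact cY (fun n => (yzP n).1).
have [e [e_gt0 eO]] := nbhs_dballP (open_nbhs_nbhs (conj oO (YO p Yp))).
have e2_gt0 : 0 < e / 2 by lra.
have [N ltN] := inv_succ_lt e2_gt0.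
have [n le_Nn /= dpn] := clp _ (nbhs_dball p e2_gt0) N.
have [_ [dyz nOz]] := yzP n; apply: nOz; apply: eO => /=.
by have := dist_triangle hd p (yz n).1 (yz n).2; have := inv_succ_le le_Nn; lra.
Qed.

Lemma noncompact_no_cluster_seq :
  ~ compact [set: X] -> exists xs : nat -> X, forall p, ~ cluster_seq xs p.
Proof.
move=> ncX; apply: contrapT => all_cl; apply: ncX.
apply: (@seq_compact_compact _ _ (fun e x y => d x y < e)).
- by move=> e x y; rewrite (distC hd).
- by move=> e e' x y z dxy dyz; have := dist_triangle hd x y z; lra.
- by move=> e e' x y; lra.
- move=> s _ A sA; have [e [e_gt0 eA]] := nbhs_dballP sA.
  by exists e => // y _; exact: eA.
- by move=> s _ e e_gt0; apply: filterS (nbhs_dball s e_gt0) => y dy _.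
- move=> u _; apply: contrapT => no_p; apply: all_cl.
  by exists u => p clp; apply: no_p; exists p.
Qed.

Lemma locally_compact_dball : locally_compact [set: X] -> forall x,
  exists r, 0 < r /\ forall r', r' <= r -> compact (closure [set y | d x y < r']).
Proof.
move=> lcX x; have [U xU [cU clU]] := lcX x I.
have xU' : nbhs x U by move: xU; rewrite /within /=; apply: filterS => y; apply.
have [r [r_gt0 rU]] := nbhs_dballP xU'.
exists r; split => // r' le_r'r.
apply: subclosed_compact (@closed_closure X _) cU _.
rewrite [X in _ `<=` X](closure_id _).1 //; apply: closureS => y /= dxy.
by apply: rU => /=; lra.
Qed.

Lemma not_cluster_seq_far (xs : nat -> X) (p : X) : ~ cluster_seq xs p ->
  exists2 e, 0 < e & exists N, forall n, (N <= n)%nat -> e <= d p (xs n).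
Proof.
move=> ncl; apply: contrapT => near_p; apply: ncl => A pA N.
have [e [e_gt0 eA]] := nbhs_dballP pA.
apply: contrapT => no_n; apply: near_p; exists e => //; exists N => n le_Nn.
by apply: Rnot_lt_le => dpn; apply: no_n; exists n => //; exact: eA.
Qed.

Lemma shrinking_dballs_finite (c : nat -> X) (r : nat -> R) :
  (forall p, ~ cluster_seq c p) -> (forall k, r k <= / (INR k + 1)) ->
  forall K, compact K -> exists M, forall k x, (M <= k)%nat -> K x -> ~ d (c k) x <= r k.
Proof.
move=> c_ncl r_le K cK; apply: contrapT => infinitely.
have hit M : exists kx : nat * X, [/\ (M <= kx.1)%nat, K kx.2 & d (c kx.1) kx.2 <= r kx.1].
  apply: contrapT => no_hit; apply: infinitely; exists M => k x le_Mk Kx dkx.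
  by apply: no_hit; exists (k, x).
have [kx kxP] := choice hit.
have Kkx M : K (kx M).2 by case: (kxP M).
have [p Kp clp] := compact_seq_compact cK Kkx.
apply: (c_ncl p) => A pA N.
have [e [e_gt0 eA]] := nbhs_dballP pA.
have e2_gt0 : 0 < e / 2 by lra.
have [N1 ltN1] := inv_succ_lt e2_gt0.
have [M le_M /= dpM] := clp _ (nbhs_dball p e2_gt0) (maxn N N1).
have [le_Mk _ dkx] := kxP M; rewrite geq_max in le_M; case/andP: le_M => le_NM le_N1M.
exists (kx M).1; first exact: leq_trans le_NM le_Mk.
apply: eA => /=; have := inv_succ_le (leq_trans le_N1M le_Mk); have := r_le (kx M).1.
have := dist_triangle hd p (kx M).2 (c (kx M).1); rewrite (distC hd (kx M).2); lra.
Qed.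

Lemma separated_balls (xs : nat -> X) :
  locally_compact [set: X] -> (forall p, ~ cluster_seq xs p) ->
  exists (U0 : set X) (U : nat -> set X),
  [/\ [/\ open U0, U0 !=set0 & compact (closure U0)],
      forall k, [/\ open (U k), U k !=set0 & compact (closure (U k))],
      forall k x, closure (U k) x -> ~ closure U0 x &
      forall K, compact K -> exists M, forall k x, (M <= k)%nat -> K x -> ~ closure (U k) x].
Proof.
move=> lcX xs_ncl; have [rho rhoP] := choice (locally_compact_dball lcX).
(* Radii at most del/3 keep the balls around x_(N+k) away from the one around
   x_0; radii at most 1/(k+1) make the family locally finite. *)
have [del del_gt0 [N farN]] := not_cluster_seq_far (xs_ncl (xs 0%nat)).
pose c k := xs (N + k)%nat.
pose r0 := Rmin (rho (xs 0%nat)) (del / 3).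
pose r k := Rmin (rho (c k)) (Rmin (del / 3) (/ (INR k + 1))).
have r0_gt0 : 0 < r0 by apply: Rmin_glb_lt; [exact: (rhoP _).1 | lra].
have r_gt0 k : 0 < r k.
  by apply: Rmin_glb_lt; [exact: (rhoP _).1 | apply: Rmin_glb_lt; [lra | exact: inv_succ_gt0]].
have r0_le : r0 <= del / 3 by exact: Rmin_r.
have r_le k : r k <= del / 3 /\ r k <= / (INR k + 1).
  by split; apply: Rle_trans (Rmin_r _ _) _; [exact: Rmin_l | exact: Rmin_r].
have ballP x s : 0 < s -> s <= rho x ->
    [/\ open [set y | d x y < s], [set y | d x y < s] !=set0
      & compact (closure [set y | d x y < s])].
  move=> s_gt0 le_s; split; first exact: open_dball.
    by exists x; rewrite /= dist_xx.
  exact: (rhoP x).2.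
exists [set y | d (xs 0%nat) y < r0], (fun k => [set y | d (c k) y < r k]); split.
- exact: ballP r0_gt0 (Rmin_l _ _).
- by move=> k; exact: ballP (r_gt0 k) (Rmin_l _ _).
- move=> k x /closure_dball_le /= dkx /closure_dball_le /= d0x.
  have : del <= d (xs 0%nat) (c k) := farN _ (leq_addr k N).
  have := dist_triangle hd (xs 0%nat) x (c k).
  by rewrite (distC hd x (c k)); have := (r_le k).1; lra.
- move=> K cK; have c_ncl p : ~ cluster_seq c p by move/cluster_seq_shift; exact: xs_ncl.
  have [M MP] := shrinking_dballs_finite c_ncl (fun k => (r_le k).2) cK.
  by exists M => k x le_Mk Kx /closure_dball_le; exact: MP.
Qed.

End Metric.

(** * The compact-open topology and homeomorphisms with compact support *)

Lemma continuous_comp_left (X Y : topologicalType) (s : Y -> Y) : continuous s ->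
  continuous (fun f : {compact-open, X -> Y} => (s \o f : {compact-open, X -> Y})).
Proof.
move=> cs f.
have FF : Filter ((fun g : {compact-open, X -> Y} => (s \o g : {compact-open, X -> Y})) @ f).
  exact: (@fmap_filter _ _ _ _ (@nbhs_filter {compact-open, X -> Y} f)).
apply/(compact_open_cvgP _ FF) => K O cK oO sfKO.
have oO' : open (s @^-1` O) by apply: open_comp => // y _; exact: cs.
apply: filterS (open_nbhs_nbhs (conj (compact_open_open cK oO') _)).
  by move=> g gKO _ [x Kx <-]; apply: (gKO (g x)); exists x.
by move=> _ [x Kx <-]; apply: (sfKO (s (f x))); exists x.
Qed.

Section CompactOpenMetric.
Variables (X : topologicalType) (d : X -> X -> R).
Hypothesis hd : is_metric_for d.

Lemma nbhs_uniform_ball (s : {compact-open, X -> X}) (A : set {compact-open, X -> X}) :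
  continuous (s : X -> X) -> nbhs s A -> exists e, 0 < e /\
    forall g : {compact-open, X -> X}, (forall x, d (s x) (g x) < e) -> A g.
Proof.
move=> cs.
pose G := filter_from [set e | 0 < e]
  (fun e => [set g : {compact-open, X -> X} | forall x, d (s x) (g x) < e]).
have GF : Filter G.
  apply: filter_from_filter; first by exists 1; rewrite /=; lra.
  move=> e1 e2 e1_gt0 e2_gt0; exists (Rmin e1 e2); first exact: Rmin_glb_lt.
  move=> g ltg; split => x /=;
    by have := ltg x; have := Rmin_l e1 e2; have := Rmin_r e1 e2; lra.
have Gs : G --> s.
  apply/compact_open_cvgP => K O cK oO sKO.
  have csK : compact (s @` K).
    by apply: continuous_compact => //; exact: continuous_subspaceT.
  have [e [e_gt0 eO]] := compact_thickening hd csK oO sKO.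
  by exists e => // g ltg _ [x Kx <-]; apply: (eO (s x)); [exists x | exact: ltg].
by move=> sA; have [e e_gt0 eA] := Gs A sA; exists e.
Qed.

Lemma nbhs_eval_ball (f : {compact-open, X -> X}) (x : X) (e : R) : 0 < e ->
  nbhs f [set g : {compact-open, X -> X} | d (f x) (g x) < e].
Proof.
move=> e_gt0.
have oE := compact_open_open (@compact_set1 _ x) (open_dball hd (f x) e).
apply: filterS (open_nbhs_nbhs (conj oE _)).
  by move=> g gxE; apply: (gxE (g x)); exists x.
by move=> _ [y -> <-] /=; rewrite (dist_xx hd).
Qed.

Lemma nbhs_neq (f h : {compact-open, X -> X}) : f <> h -> nbhs f [set g | g <> h].
Proof.
move=> neq_fh; have [x neq_x] : exists x, f x <> h x.
  apply: contrapT => eq_fh; apply: neq_fh; apply: funext => x.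
  by apply: contrapT => neq_x; apply: eq_fh; exists x.
apply: filterS (nbhs_eval_ball f x (dist_gt0 hd neq_x)) => g /= + eq_gh.
by rewrite eq_gh; lra.
Qed.

Lemma nbhs_supported_uniform (s : {compact-open, X -> X}) (C : set X) (e : R) :
  continuous (s : X -> X) -> compact C -> (forall x, ~ C x -> s x = x) -> 0 < e ->
  nbhs s [set g : {compact-open, X -> X} |
    (forall x, ~ C x -> g x = x) -> forall x, d (s x) (g x) < e].
Proof.
(* Otherwise the points where some supported g near s is e-far from s cluster at
   some z in C, which the subbasic neighbourhood
   [g(C /\ B[z, r/2]) <= B(s z, e/3)] of s rules out. *)
move=> cs cC sC e_gt0; apply: contrapT => not_nbhs.
pose bad (B : set {compact-open, X -> X}) := [set x | exists g : {compact-open, X -> X},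
  [/\ B g, forall y, ~ C y -> g y = y, C x & e <= d (s x) (g x)]].
pose P := filter_from [set B | nbhs s B] bad.
have PF : ProperFilter P.
  apply: filter_from_proper; last first.
    move=> B sB; apply: contrapT => no_bad; apply: not_nbhs.
    apply: filterS sB => g Bg gC x; apply: Rnot_le_lt => le_e.
    have Cx : C x.
      by apply: contrapT => nCx; move: le_e; rewrite (gC x nCx) (sC x nCx) (dist_xx hd); lra.
    by apply: no_bad; exists x, g.
  apply: filter_from_filter; first by exists setT; exact: filterT.
  move=> B1 B2 B1s B2s; exists (B1 `&` B2); first exact: filterI.
  by move=> x [g [[B1g B2g] gC Cx le_e]]; split; exists g.
have PC : P C by exists setT; [exact: filterT | move=> x [g []]].
have [z [Cz clz]] := cC P PF PC.
have e3_gt0 : 0 < e / 3 by lra.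
have [r [r_gt0 rs]] := nbhs_dballP hd (cs z _ (nbhs_dball hd (s z) e3_gt0)).
have r2_gt0 : 0 < r / 2 by lra.
pose K := C `&` [set y | d z y <= r / 2].
have cK : compact K by apply: compact_closedI => //; exact: closed_dcball.
pose B := [set g : {compact-open, X -> X} | g @` K `<=` [set y | d (s z) y < e / 3]].
have sB : nbhs s B.
  apply: open_nbhs_nbhs; split; first exact: compact_open_open cK (open_dball hd _ _).
  by move=> _ [y [Cy /= dzy] <-]; apply: rs => /=; lra.
have PB : P (bad B) by exists B.
have [x [[g [Bg _ Cx le_e]] /= dzx]] := clz _ _ PB (nbhs_dball hd z r2_gt0).
have d_gx : d (s z) (g x) < e / 3 by apply: Bg; exists x => //; split => //=; lra.
have d_sx : d (s z) (s x) < e / 3 by apply: rs => /=; lra.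
by have := dist_triangle hd (s x) (s z) (g x); rewrite (distC hd (s x) (s z)); lra.
Qed.

End CompactOpenMetric.

Definition co_id (X : topologicalType) : {compact-open, X -> X} := id.
Arguments co_id : clear implicits.

Section HomeoK.
Variables (X : topologicalType) (C : set X).
Implicit Types s t : {compact-open, X -> X}.

Lemma HomeoK_continuous s : HomeoK C s -> continuous (s : X -> X).
Proof. by case=> -[]. Qed.

Lemma HomeoK_fix s : HomeoK C s -> forall x, ~ C x -> s x = x.
Proof. by case. Qed.

Lemma continuous_co_id : continuous (co_id X : X -> X).
Proof. by move=> x; exact: cvg_id. Qed.

Lemma HomeoK_id : HomeoK C (co_id X).
Proof.
by split=> //; split; [|exists id; split=> //]; exact: continuous_co_id.
Qed.

Lemma HomeoK_comp s t : HomeoK C s -> HomeoK C t -> HomeoK C (s \o t).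
Proof.
move=> [[cs [s' [cs' [ss' s's]]]] sC] [[ct [t' [ct' [tt' t't]]]] tC].
split; last by move=> x nCx /=; rewrite (tC x nCx) (sC x nCx).
split; first by move=> x; apply: continuous_comp; [exact: ct | exact: cs].
exists (t' \o s'); split; first by move=> x; apply: continuous_comp; [exact: cs' | exact: ct'].
by split=> x /=; [rewrite ss' tt' | rewrite t't s's].
Qed.

Lemma HomeoK_inv s : HomeoK C s ->
  exists t, [/\ HomeoK C t, cancel s t & cancel t s].
Proof.
move=> [[cs [s' [cs' [ss' s's]]]] sC]; exists s'; split => //; split.
  by split=> //; exists s.
by move=> x nCx; rewrite -{1}(sC x nCx) ss'.
Qed.

Lemma HomeoK_moved s x : HomeoK C s -> s x <> x -> C x /\ C (s x).
Proof.
move=> [[_ [s' [_ [ss' _]]]] sC] sx_neq; split; apply: contrapT => nC.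
  by apply: sx_neq; exact: sC.
by apply: sx_neq; have := congr1 s' (sC _ nC); rewrite ss' => ->.
Qed.

Lemma subspace_locally_compact_HomeoK (O K : set {compact-open, X -> X}) :
  open O -> O (co_id X) -> O `&` HomeoK C `<=` K -> K `<=` HomeoK C -> compact K ->
  subspace_locally_compact (HomeoK C).
Proof.
move=> oO Oid OK KC cK s Cs; have [t [Ct st ts]] := HomeoK_inv Cs.
pose Lt := fun f : {compact-open, X -> X} => (t \o f : {compact-open, X -> X}).
pose Ls := fun f : {compact-open, X -> X} => (s \o f : {compact-open, X -> X}).
have cLt : continuous Lt := continuous_comp_left (HomeoK_continuous Ct).
have cLs : continuous Ls := continuous_comp_left (HomeoK_continuous Cs).
exists (Lt @^-1` O), (Ls @` K); split.
- by apply: open_comp => // f _; exact: cLt.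
- by rewrite /= /Lt (_ : t \o s = co_id X) //; apply: funext => x /=; rewrite st.
- move=> f [Of Cf]; exists (t \o f); last by apply: funext => x /=; rewrite /Ls /= ts.
  by apply: OK; split => //; exact: HomeoK_comp.
- by move=> _ [g Kg <-]; apply: HomeoK_comp => //; exact: KC.
- by apply: continuous_compact => //; exact: continuous_subspaceT.
Qed.

End HomeoK.

Section HomeoKMetric.
Variables (X : topologicalType) (d : X -> X -> R).
Hypothesis hd : is_metric_for d.

Lemma cluster_seq_comp_disjoint (C0 C1 : set X) (a b : nat -> {compact-open, X -> X})
    (f : {compact-open, X -> X}) :
  (forall x, C1 x -> ~ C0 x) -> (forall j, HomeoK C0 (a j)) -> (forall j, HomeoK C1 (b j)) ->
  (forall j x, d x (b j x) < / (INR j + 1)) -> is_homeo f ->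
  cluster_seq (fun j => (a j \o b j : {compact-open, X -> X})) f ->
  HomeoK C0 f /\ cluster_seq a f.
Proof.
(* Off C0 the maps a_j o b_j = b_j tend to the identity, so f fixes the
   complement of C0.  Then any subbasic neighbourhood of f containing a_j o b_j
   contains a_j: off C1 the two agree, on C1 both a_j and f are the identity. *)
move=> C10 C0a C1b b_near f_homeo clf.
have ab_out j x : ~ C0 x -> a j (b j x) = b j x.
  move=> nC0x; have [bx|nbx] := pselect (b j x = x).
    by rewrite bx; exact: (HomeoK_fix (C0a j) nC0x).
  by have [_ C1bx] := HomeoK_moved (C1b j) nbx; exact: (HomeoK_fix (C0a j) (C10 _ C1bx)).
have f_out x : ~ C0 x -> f x = x.
  move=> nC0x; apply: contrapT => fx_neq.
  have del_gt0 : 0 < d x (f x) / 2.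
    by have := dist_gt0 hd (fun e => fx_neq (esym e)); lra.
  have [N ltN] := inv_succ_lt del_gt0.
  have [j le_Nj /=] := clf _ (nbhs_eval_ball hd f x del_gt0) N.
  rewrite ab_out //; have := b_near j x; have := inv_succ_le le_Nj.
  by have := dist_triangle hd x (b j x) (f x); rewrite (distC hd (b j x) (f x)); lra.
split; first by split.
have a_sub j K O : f @` K `<=` O -> (a j \o b j) @` K `<=` O -> a j @` K `<=` O.
  move=> fKO abKO _ [y Ky <-]; have [C1y|nC1y] := pselect (C1 y).
    rewrite (HomeoK_fix (C0a j) (C10 _ C1y)).
    by have := fKO (f y) (ex_intro2 _ _ y Ky erefl); rewrite f_out //; exact: C10.
  by rewrite -{1}(HomeoK_fix (C1b j) nC1y); apply: abKO; exists y.
move/cluster_seqP: clf => -[J [PJ tailsJ abJ]].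
apply/cluster_seqP; exists J; split => //.
have aF := @fmap_filter _ _ a J PJ.
have abF := @fmap_filter _ _ (fun j => (a j \o b j : {compact-open, X -> X})) J PJ.
apply/(compact_open_cvgP _ aF) => K O cK oO fKO.
have := (compact_open_cvgP _ abF).1 abJ K O cK oO fKO.
exact: filterS (fun j => a_sub j K O fKO).
Qed.

Lemma colim_open_near_id (U : set {compact-open, X -> X}) (K : set X) :
  colim_open U -> U (co_id X) -> compact K ->
  exists2 e, 0 < e & forall g, HomeoK K g -> (forall x, d x (g x) < e) -> U g.
Proof.
move=> [_ UK] Uid cK; have [B [oB UKB]] := UK K cK.
have BKid : (B `&` HomeoK K) (co_id X).
  by rewrite -UKB; split; [split|]; [exact: Uid | exact: HomeoK_id | exact: HomeoK_id].
have [e [e_gt0 eB]] :=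
  nbhs_uniform_ball hd (@continuous_co_id X) (open_nbhs_nbhs (conj oB BKid.1)).
exists e => // g Kg near_g; have : (B `&` HomeoK K) g by split => //; exact: eB.
by rewrite -UKB => -[[]].
Qed.

Section SupportedIn.
Variable C : set X.
Hypothesis cC : compact C.

Lemma HomeoK_nbhs_id_dball (r : R) : 0 < r -> exists O : set {compact-open, X -> X},
  [/\ open O, O (co_id X) & forall g, O g -> HomeoK C g -> forall x, d x (g x) < r].
Proof.
move=> r_gt0.
move: (nbhs_supported_uniform hd (@continuous_co_id X) cC (fun x _ => erefl) r_gt0).
rewrite nbhsE => -[B [oB Bid] BP]; exists B; split => // g Bg Cg.
exact: BP g Bg (HomeoK_fix Cg).
Qed.

Lemma compact_HomeoK_dball (r : R) :
  (forall a : nat -> {compact-open, X -> X},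
     (forall j, HomeoK C (a j) /\ forall x, d x (a j x) <= r) ->
     exists2 f, HomeoK C f & cluster_seq a f) ->
  compact [set g : {compact-open, X -> X} | HomeoK C g /\ forall x, d x (g x) <= r].
Proof.
move=> seqK.
apply: (@seq_compact_compact _ _
  (fun e (f g : {compact-open, X -> X}) => forall x, d (f x) (g x) < e)).
- by move=> e f g fg x; rewrite (distC hd); exact: fg.
- move=> e e' f g h fg gh x.
  by have := dist_triangle hd (f x) (g x) (h x); have := fg x; have := gh x; lra.
- by move=> e e' f g le_ee' fg x; have := fg x; lra.
- move=> s [Cs _] A sA.
  have [e [e_gt0 eA]] := nbhs_uniform_ball hd (HomeoK_continuous Cs) sA.
  by exists e => // g _; exact: eA.
- move=> s [Cs _] e e_gt0.
  apply: filterS (nbhs_supported_uniform hd (HomeoK_continuous Cs) cC (HomeoK_fix Cs) e_gt0).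
  by move=> g sg [Cg _]; exact: sg (HomeoK_fix Cg).
- move=> a Ka; have [f Cf clf] := seqK a Ka; exists f => //; split => // x.
  apply: Rnot_lt_le => lt_r; have del_gt0 : 0 < d x (f x) - r by lra.
  have [j _ /= dj] := clf _ (nbhs_eval_ball hd f x del_gt0) 0%nat.
  have := (Ka j).2 x; have := dist_triangle hd x (a j x) (f x).
  by rewrite (distC hd (a j x) (f x)); lra.
Qed.

Hypothesis not_lc : ~ subspace_locally_compact (HomeoK C).

Lemma HomeoK_seq_no_cluster (r : R) : 0 < r ->
  exists a : nat -> {compact-open, X -> X},
    (forall j, HomeoK C (a j) /\ forall x, d x (a j x) <= r) /\
    forall f, HomeoK C f -> ~ cluster_seq a f.
Proof.
move=> r_gt0; apply: contrapT => no_a; apply: not_lc.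
have [B [oB Bid Br]] := HomeoK_nbhs_id_dball r_gt0.
apply: (subspace_locally_compact_HomeoK oB Bid _ _ (compact_HomeoK_dball _)).
- by move=> g [Bg Cg]; split => // x; apply: Rlt_le; exact: Br.
- by move=> g [].
- move=> a Ka; apply: contrapT => no_f; apply: no_a.
  by exists a; split => // f Cf clf; apply: no_f; exists f.
Qed.

Lemma HomeoK_nontrivial_near_id (e : R) : 0 < e ->
  exists b, [/\ HomeoK C b, b <> co_id X & forall x, d x (b x) < e].
Proof.
move=> e_gt0; apply: contrapT => no_b; apply: not_lc.
have [B [oB Bid Be]] := HomeoK_nbhs_id_dball e_gt0.
apply: (subspace_locally_compact_HomeoK oB Bid _ _ (@compact_set1 _ (co_id X))).
- move=> g [Bg Cg] /=; apply: contrapT => neq_g; apply: no_b.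
  by exists g; split => //; exact: Be.
- by move=> g ->; exact: HomeoK_id.
Qed.

End SupportedIn.

End HomeoKMetric.

(** * Discontinuity of composition *)

Unset Implicit Arguments.

Section CompositionDiscontinuous.
Variables (X : topologicalType) (d : X -> X -> R).
Hypothesis hd : is_metric_for d.
Variables (C0 : set X) (C : nat -> set X).
Hypothesis cC0 : compact C0.
Hypothesis cC : forall k, compact (C k).
Hypothesis C_disjoint : forall k x, C k x -> ~ C0 x.
Hypothesis C_finite : forall K, compact K ->
  exists M, forall k x, (M <= k)%nat -> K x -> ~ C k x.
Variables a b : nat -> nat -> {compact-open, X -> X}.
Hypothesis a_HomeoK : forall k j, HomeoK C0 (a k j).
Hypothesis a_near_id : forall k j x, d x (a k j x) <= / (INR k + 1).
Hypothesis a_no_cluster : forall k f, HomeoK C0 f -> ~ cluster_seq (a k) f.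
Hypothesis b_HomeoK : forall k j, HomeoK (C k) (b k j).
Hypothesis b_nontrivial : forall k j, b k j <> co_id X.
Hypothesis b_near_id : forall k j x, d x (b k j x) < / (INR j + 1).

Let ab k j : {compact-open, X -> X} := a k j \o b k j.
Let E := [set f | exists k j, f = ab k j].
Let W := [set f | HomeoC f /\ ~ E f].

Lemma ab_moves k j : exists2 x, C k x & ab k j x <> x.
Proof.
have [x bx] : exists x, b k j x <> x.
  apply: contrapT => fixed; apply: (b_nontrivial k j); apply: funext => x.
  by apply: contrapT => bx; apply: fixed; exists x.
have [Cx Cbx] := HomeoK_moved (b_HomeoK k j) bx.
by exists x => //; rewrite /ab /= (HomeoK_fix (a_HomeoK k j) (C_disjoint k _ Cbx)).
Qed.

Lemma HomeoK_ab_bounded (K : set X) : compact K ->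
  exists M, forall k j, HomeoK K (ab k j) -> (k < M)%nat.
Proof.
move=> cK; have [M MP] := C_finite K cK; exists M => k j Kab.
rewrite ltnNge; apply/negP => le_Mk; have [x Ckx abx] := ab_moves k j.
apply: (MP k x le_Mk _ Ckx); apply: contrapT => nKx.
exact: abx (HomeoK_fix Kab nKx).
Qed.

Lemma nbhs_avoid_ab k (f : {compact-open, X -> X}) : is_homeo f -> ~ E f ->
  nbhs f [set g | forall j, g <> ab k j].
Proof.
move=> f_homeo nEf.
have ncl : ~ cluster_seq (ab k) f.
  move=> clf; have [C0f cla] := cluster_seq_comp_disjoint hd (C_disjoint k)
    (a_HomeoK k) (b_HomeoK k) (b_near_id k) f_homeo clf.
  exact: a_no_cluster k f C0f cla.
have [A [N [fA notA]]] : exists A N, nbhs f A /\ forall j, (N <= j)%nat -> ~ A (ab k j).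
  apply: contrapT => no_A; apply: ncl => A fA N.
  apply: contrapT => no_j; apply: no_A; exists A, N; split => // j le_Nj Aj.
  by apply: no_j; exists j.
have below_N : nbhs f [set g | forall j, (j < N)%nat -> g <> ab k j].
  by apply: filter_forall_lt => j _; apply: (nbhs_neq hd) => eq_f; apply: nEf; exists k, j.
apply: filterS (filterI fA below_N) => g [Ag gN] j.
have [lt_jN|le_Nj] := ltnP j N; first exact: gN.
by move=> eq_g; apply: (notA j le_Nj); rewrite -eq_g.
Qed.

Lemma colim_open_W : colim_open W.
Proof.
split=> [f []//|K cK].
exists (~` closure (E `&` HomeoK K)); split; first by rewrite openC; exact: closed_closure.
apply/seteqP; split => f.
  move=> [[[_ nEf] Kf] _]; split => //.
  have [M MP] := HomeoK_ab_bounded K cK.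
  have avoid : nbhs f [set g | forall k, (k < M)%nat -> forall j, g <> ab k j].
    by apply: filter_forall_lt => k _; exact: nbhs_avoid_ab k f Kf.1 nEf.
  move=> /(_ _ avoid) [g [[[k [j ->]] Kg] avoid_g]].
  exact: avoid_g k (MP k j Kg) j erefl.
move=> [ncl Kf]; split => //; split => //; split; first by exists K.
by move=> Ef; apply: ncl; apply: subset_closure.
Qed.

Lemma composition_not_continuous : ~ ACP X.
Proof.
move=> [comp_cont _].
have Cid : HomeoC (co_id X) by exists set0; split; [exact: compact0 | exact: HomeoK_id].
have Wid : W (co_id X \o co_id X).
  by split => // -[k [j eq_id]]; have [x _] := ab_moves k j; apply; rewrite -eq_id.
have [U [V [cU cV Uid Vid UV]]] := comp_cont W colim_open_W _ _ Cid Cid Wid.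
have [eU eU_gt0 UP] := colim_open_near_id hd cU Uid cC0.
have [k ltk] := inv_succ_lt eU_gt0.
have [eV eV_gt0 VP] := colim_open_near_id hd cV Vid (cC k).
have [j ltj] := inv_succ_lt eV_gt0.
have Ua : U (a k j) by apply: UP (a_HomeoK k j) _ => x; have := a_near_id k j x; lra.
have Vb : V (b k j) by apply: VP (b_HomeoK k j) _ => x; have := b_near_id k j x; lra.
by have [_] := UV _ _ Ua Vb; apply; exists k, j.
Qed.

End CompositionDiscontinuous.

Theorem theoremC (X : topologicalType) :
  hausdorff_space X ->
  locally_compact [set: X] ->
  metrizable X ->
  ~ compact [set: X] ->
  (forall U : set X, open U -> U !=set0 -> compact (closure U) ->
     ~ subspace_locally_compact (HomeoK (closure U))) ->
  ~ ACP X.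
Proof.
move=> _ lcX /metrizable_metric [d hd] ncX not_lc.
have [xs xs_ncl] := noncompact_no_cluster_seq hd ncX.
have [U0 [U [[oU0 U0_ne cU0] UP U_disj U_finite]]] := separated_balls hd lcX xs_ncl.
have cU k : compact (closure (U k)) by case: (UP k).
have not_lcU k : ~ subspace_locally_compact (HomeoK (closure (U k))).
  by case: (UP k) => oU U_ne; exact: not_lc.
have [a aP] := choice (fun k =>
  HomeoK_seq_no_cluster hd cU0 (not_lc _ oU0 U0_ne cU0) (inv_succ_gt0 k)).
have [b bP] := choice (fun kj : nat * nat =>
  HomeoK_nontrivial_near_id hd (cU kj.1) (not_lcU kj.1) (inv_succ_gt0 kj.2)).
apply: (composition_not_continuous X d hd _ _ cU0 cU U_disj U_finite
  a (fun k j => b (k, j))).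
- by move=> k j; case: (aP k) => /(_ j) [].
- by move=> k j; case: (aP k) => /(_ j) [].
- by move=> k; case: (aP k).
- by move=> k j; case: (bP (k, j)).
- by move=> k j; case: (bP (k, j)).
- by move=> k j; case: (bP (k, j)).
Qed.
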